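(* Let $\mathcal{H}$ be a complex Hilbert space, let $T, S\in\mathbb{B}(\mathcal{H})$ be self-adjoint operators and let $N(\cdot)$ be a self-adjoint algebra norm on $\mathbb{B}(\mathcal{H})$. If $TS = ST$ or $TS=-ST$, then $$w_{N}(TS) \leq \min\{N(T)w_{N}(S),\ N(S)w_{N}(T)\}.$$
   Context: $\mathbb{B}(\mathcal{H})$ is the algebra of bounded linear operators on $\mathcal{H}$. A norm $N(\cdot)$ on $\mathbb{B}(\mathcal{H})$ is an algebra norm if $N(TS)\le N(T)N(S)$ for all $T,S$, and self-adjoint if $N(T^* )=N(T)$ for all $T$. For $A\in\mathbb{B}(\mathcal{H})$, ${\rm Re}(A)=\frac{A+A^*}{2}$. The generalized numerical radius is $w_N(T)=\sup_{\theta\in\mathbb{R}} N\big({\rm Re}(e^{i\theta}T)\big)$. *)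

From HB Require Import structures.
From mathcomp Require Import all_boot all_order all_algebra.
From mathcomp Require Import all_classical all_reals all_analysis.
From mathcomp Require Import Rstruct Rstruct_topology.
From mathcomp Require Import complex.
From Stdlib Require Import ClassicalEpsilon.

Set Implicit Arguments.
Unset Strict Implicit.
Unset Printing Implicit Defensive.

Import Order.TTheory GRing.Theory Num.Theory.
Local Open Scope ring_scope.

Notation RR := Rdefinitions.R.
Notation CC := (RR[i]).

Section Hilbert.
Variable V : lmodType CC.
Variable ip : V -> V -> CC.  (* inner product, linear in the first argument *)

Definition is_inner_product : Prop :=
  [/\ (forall (a : CC) (x y z : V), ip (a *: x + y) z = a * ip x z + ip y z),
      (forall x y : V, ip x y = (ip y x)^*),
      (forall x : V, 0 <= ip x x) &
      (forall x : V, ip x x = 0 -> x = 0)].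

Definition hnorm (x : V) : RR := Num.sqrt (complex.Re (ip x x)).

Definition hcomplete : Prop :=
  forall u : nat -> V,
    (forall e : RR, 0 < e -> exists M : nat, forall m n : nat,
        (M <= m)%N -> (M <= n)%N -> hnorm (u m - u n) < e) ->
    exists l : V, forall e : RR, 0 < e -> exists M : nat, forall n : nat,
        (M <= n)%N -> hnorm (u n - l) < e.

Definition is_hilbert : Prop := is_inner_product /\ hcomplete.

Definition bounded_op (T : V -> V) : Prop :=
  (forall (a : CC) (x y : V), T (a *: x + y) = a *: T x + T y) /\
  exists M : RR, forall x : V, hnorm (T x) <= M * hnorm x.

Definition op_add (A B : V -> V) : V -> V := fun x => A x + B x.
Definition op_scale (c : CC) (A : V -> V) : V -> V := fun x => c *: A x.
Definition op_mul (A B : V -> V) : V -> V := fun x => A (B x).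

(* Hilbert adjoint A^* : the operator with <A x, y> = <x, A^* y>
   (exists and is unique for A in B(H), by Riesz) *)
Definition adjoint (A : V -> V) : V -> V :=
  epsilon (inhabits (fun x : V => x))
          (fun B : V -> V => forall x y : V, ip (A x) y = ip x (B y)).

Definition selfadjoint (A : V -> V) : Prop := adjoint A = A.

Definition op_Re (A : V -> V) : V -> V :=
  op_scale (2^-1) (op_add A (adjoint A)).

Definition cmod (c : CC) : RR := complex.Re `|c|.

Definition sa_algebra_norm (N : (V -> V) -> RR) : Prop :=
  (forall A, bounded_op A -> 0 <= N A) /\
  (forall A, bounded_op A -> N A = 0 -> A = (fun _ => 0)) /\
  (forall (c : CC) A, bounded_op A -> N (op_scale c A) = cmod c * N A) /\
  (forall A B, bounded_op A -> bounded_op B ->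
     N (op_add A B) <= N A + N B) /\
  (forall A B, bounded_op A -> bounded_op B ->
     N (op_mul A B) <= N A * N B) /\
  (forall A, bounded_op A -> N (adjoint A) = N A).

Definition expi (t : RR) : CC := (cos t +i* sin t)%C.

Definition w_N (N : (V -> V) -> RR) (T : V -> V) : RR :=
  sup [set N (op_Re (op_scale (expi t) T)) | t in [set: RR]].

End Hilbert.

From HB Require Import structures.
From mathcomp Require Import all_boot all_order all_algebra.
From mathcomp Require Import all_classical all_reals all_analysis.
From mathcomp Require Import Rstruct Rstruct_topology complex.
From mathcomp Require Import ring lra.
From Stdlib Require Import ClassicalEpsilon.
Import Order.TTheory GRing.Theory Num.Theory.
Local Open Scope ring_scope.

(** Because [T] and [S] are self-adjoint, [TS] is symmetric when [TS = ST] and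
    skew-symmetric when [TS = -ST].  Hence [Re(e^{it} TS)] is [Re(e^{it}) TS] or
    [i Im(e^{it}) TS], a scalar of modulus at most 1 times [TS], so
    [w_N(TS) <= N(TS) <= N(T) N(S)]; and for self-adjoint [X] the same computation
    with equality at [t = 0] gives [w_N(X) = N(X)].

    The adjoint is defined by choice, so [adjoint T = T] only says that [T] is
    symmetric once some adjoint of [T] is known to exist.  That is the Riesz
    representation theorem, proved from the point of minimal norm on the closed
    hyperplane [f = 1]: a minimizing sequence is Cauchy by the parallelogram law,
    its limit is the minimizer by completeness, and minimality makes it orthogonal
    to [ker f]. *)

Lemma eventually_invS_lt (s : RR) : 0 < s ->
  exists M : nat, forall n, (M <= n)%N -> n.+1%:R^-1 < s.
Proof.
move=> s_gt0; exists (Num.trunc s^-1) => n hn.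
rewrite invf_plt ?posrE ?ltr0Sn //.
by apply: lt_le_trans (truncnS_gt _) _; rewrite ler_nat ltnS.
Qed.

Definition sqmod (z : CC) : RR := complex.Re z ^+ 2 + complex.Im z ^+ 2.

Lemma sqmod_ge0 z : 0 <= sqmod z.
Proof. rewrite /sqmod; nra. Qed.

Lemma sqmod_le0 z : sqmod z <= 0 -> z = 0.
Proof.
case: z => a b; rewrite /sqmod /= => z0.
have a0 : a = 0 by nra.
have b0 : b = 0 by nra.
by rewrite a0 b0.
Qed.

Lemma conj_real_complex (r : RR) : (r%:C%C : CC)^* = r%:C%C.
Proof. by apply/eqP; rewrite eq_complex /= oppr0 !eqxx. Qed.

Lemma cmod_expi t : cmod (expi t) = 1.
Proof. by rewrite /cmod normc_def /= cos2Dsin2 sqrtr1. Qed.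

Lemma cmod_Re_le c : cmod (complex.Re c)%:C%C <= cmod c.
Proof.
case: c => a b; rewrite /cmod !normc_def /=; apply: ler_wsqrtr.
by have := sqr_ge0 b; lra.
Qed.

Lemma cmod_iIm_le c : cmod ('i%C * (complex.Im c)%:C%C) <= cmod c.
Proof.
case: c => a b; rewrite /cmod !normc_def /=; apply: ler_wsqrtr.
by have := sqr_ge0 a; have := sqr_ge0 b; nra.
Qed.

Section InnerProductSpace.
Context {V : lmodType CC} {ip : V -> V -> CC}.
Hypothesis ipP : is_inner_product ip.

Lemma ipDZl a x y z : ip (a *: x + y) z = a * ip x z + ip y z.
Proof. by case: ipP. Qed.

Lemma ipC x y : ip x y = (ip y x)^*.
Proof. by case: ipP. Qed.

Lemma ip0l z : ip 0 z = 0.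
Proof.
by have := ipDZl (-1) z z z; rewrite scaleN1r addNr mulN1r addNr.
Qed.

Lemma ipDl x y z : ip (x + y) z = ip x z + ip y z.
Proof. by have := ipDZl 1 x y z; rewrite scale1r mul1r. Qed.

Lemma ipZl a x z : ip (a *: x) z = a * ip x z.
Proof. by have := ipDZl a x 0 z; rewrite !addr0 ip0l addr0. Qed.

Lemma ipNl x z : ip (- x) z = - ip x z.
Proof. by rewrite -scaleN1r ipZl mulN1r. Qed.

Lemma ipZr a x y : ip x (a *: y) = a^* * ip x y.
Proof. by rewrite ipC ipZl rmorphM /= -ipC. Qed.

Lemma ipDr x y z : ip x (y + z) = ip x y + ip x z.
Proof. by rewrite ipC ipDl rmorphD /= -!ipC. Qed.

Lemma ip0r x : ip x 0 = 0.
Proof. by rewrite ipC ip0l conjC0. Qed.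

Lemma ipNr x y : ip x (- y) = - ip x y.
Proof. by rewrite ipC ipNl rmorphN /= -ipC. Qed.

Lemma ipBr x y z : ip x (y - z) = ip x y - ip x z.
Proof. by rewrite ipDr ipNr. Qed.

Definition sqnorm x : RR := complex.Re (ip x x).

Lemma ip_sqnorm x : ip x x = (sqnorm x)%:C%C.
Proof.
case: ipP => _ _ /(_ x) + _; rewrite lecE /sqnorm.
by case: (ip x x) => a b /= /andP[/eqP -> _].
Qed.

Lemma sqnorm_ge0 x : 0 <= sqnorm x.
Proof. by case: ipP => _ _ /(_ x); rewrite lecE => /andP[]. Qed.

Lemma sqnorm0 : sqnorm 0 = 0.
Proof. by rewrite /sqnorm ip0l. Qed.

Lemma sqnorm_eq0 x : (sqnorm x == 0) = (x == 0).
Proof.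
apply/eqP/eqP => [sx0|->]; last exact: sqnorm0.
by case: ipP => _ _ _; apply; rewrite ip_sqnorm sx0.
Qed.

Lemma sqnormN x : sqnorm (- x) = sqnorm x.
Proof. by rewrite /sqnorm ipNl ipNr opprK. Qed.

Lemma sqnormZ a x : sqnorm (a *: x) = sqmod a * sqnorm x.
Proof.
by rewrite /sqnorm ipZl ipZr ip_sqnorm /sqmod; case: a => a b /=; ring.
Qed.

Lemma sqnormD x y :
  sqnorm (x + y) = sqnorm x + sqnorm y + 2 * complex.Re (ip x y).
Proof.
rewrite /sqnorm ipDl !ipDr (ipC y x) !ip_sqnorm.
by case: (ip x y) => a b /=; ring.
Qed.

Lemma parallelogram x y :
  sqnorm (x + y) + sqnorm (x - y) = 2 * sqnorm x + 2 * sqnorm y.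
Proof. by rewrite !sqnormD sqnormN ipNr; case: (ip x y) => a b /=; ring. Qed.

Lemma cauchy_schwarz x y : sqmod (ip x y) <= sqnorm x * sqnorm y.
Proof.
have [/eqP|sx_neq0] := eqVneq (sqnorm x) 0.
  rewrite sqnorm_eq0 => /eqP ->.
  by rewrite ip0l sqnorm0 mul0r /sqmod /= expr0n /= addr0.
have sx_gt0 : 0 < sqnorm x by rewrite lt0r sx_neq0 sqnorm_ge0.
(* expand 0 <= ||a x + y||^2 at the minimizing a = - <y, x> / ||x||^2 *)
set t := (sqnorm x)^-1.
have := sqnorm_ge0 (((- t)%:C%C * (ip x y)^*) *: x + y).
rewrite sqnormD sqnormZ ipZl.
have -> : sqmod ((- t)%:C%C * (ip x y)^*) = t ^+ 2 * sqmod (ip x y).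
  by rewrite /sqmod; case: (ip x y) => a b /=; ring.
have -> : complex.Re ((- t)%:C%C * (ip x y)^* * ip x y) = - t * sqmod (ip x y).
  by rewrite /sqmod; case: (ip x y) => a b /=; ring.
have -> : t ^+ 2 * sqmod (ip x y) * sqnorm x + sqnorm y
    + 2 * (- t * sqmod (ip x y)) = t * (sqnorm x * sqnorm y - sqmod (ip x y)).
  by rewrite /t; field.
by rewrite pmulr_rge0 ?invr_gt0 // subr_ge0.
Qed.

Lemma hnorm_ge0 x : 0 <= hnorm ip x.
Proof. exact: sqrtr_ge0. Qed.

Lemma sqr_hnorm x : hnorm ip x ^+ 2 = sqnorm x.
Proof. by rewrite sqr_sqrtr ?sqnorm_ge0. Qed.

Lemma hnormN x : hnorm ip (- x) = hnorm ip x.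
Proof. by rewrite /hnorm -/(sqnorm _) sqnormN. Qed.

Lemma hnorm_ltE x e : 0 <= e -> (hnorm ip x < e) = (sqnorm x < e ^+ 2).
Proof. by move=> e_ge0; rewrite -sqr_hnorm ltr_pXn2r // nnegrE hnorm_ge0. Qed.

Lemma Re_ip_le x y : complex.Re (ip x y) <= hnorm ip x * hnorm ip y.
Proof.
have : complex.Re (ip x y) ^+ 2 <= (hnorm ip x * hnorm ip y) ^+ 2.
  have := cauchy_schwarz x y; rewrite exprMn !sqr_hnorm /sqmod.
  have := sqr_ge0 (complex.Im (ip x y)); lra.
have := mulr_ge0 (hnorm_ge0 x) (hnorm_ge0 y).
move: (complex.Re _) (_ * _) => r p; nra.
Qed.

Definition hcvg (u : nat -> V) (l : V) := forall e : RR, 0 < e ->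
  exists M : nat, forall n : nat, (M <= n)%N -> hnorm ip (u n - l) < e.

Definition hclosed (A : set V) :=
  forall u l, (forall n, A (u n)) -> hcvg u l -> A l.

Definition midpoint_closed (A : set V) :=
  forall x y, A x -> A y -> A (2^-1 *: (x + y)).

Lemma sqnorm_sub_le {A : set V} {d : RR} {x y : V} : midpoint_closed A ->
  (forall z, A z -> d <= sqnorm z) -> A x -> A y ->
  sqnorm (x - y) <= 2 * (sqnorm x - d) + 2 * (sqnorm y - d).
Proof.
move=> Amid Ad Ax Ay; have := Ad _ (Amid _ _ Ax Ay).
rewrite sqnormZ; have -> : sqmod (2^-1) = 4^-1.
  by rewrite /sqmod /=; field.
have := parallelogram x y; lra.
Qed.

Lemma sqnorm_hcvg_le u l d : hcvg u l ->
  (forall n, sqnorm (u n) <= d + n.+1%:R^-1) -> sqnorm l <= d.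
Proof.
move=> ul ud; apply/ler_addgt0Pr => eps eps_gt0.
have d_ge : -1 <= d.
  by have := ud 0%N; have := sqnorm_ge0 (u 0%N); rewrite invr1; lra.
have [de [de_gt0 de_le1 de_eps]] :
    exists de, [/\ 0 < de, de <= 1 & de * (2 * d + 6) <= eps].
  exists (Num.min 1 (eps / (2 * d + 6))); split.
  - by rewrite lt_min ltr01 divr_gt0 //; lra.
  - by rewrite ge_min lexx.
  - rewrite -ler_pdivlMr; last by lra.
    by rewrite ge_min lexx orbT.
have [M1 hM1] := ul de de_gt0.
have [M2 hM2] := eventually_invS_lt _ de_gt0.
pose n := maxn M1 M2.
have w_lt : hnorm ip (l - u n) < de.
  by rewrite -hnormN opprB; apply: hM1; rewrite leq_maxl.
have un_le : sqnorm (u n) <= d + de.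
  by apply: (le_trans (ud n)); rewrite lerD2l ltW // hM2 // leq_maxr.
have hun_le : hnorm ip (u n) <= d + 2.
  by have := sqr_hnorm (u n); have := hnorm_ge0 (u n); nra.
have aw_le : hnorm ip (u n) * hnorm ip (l - u n) <= (d + 2) * de.
  by rewrite ler_pM ?hnorm_ge0 // ltW.
have w2_le : sqnorm (l - u n) <= de.
  by rewrite -sqr_hnorm; have := hnorm_ge0 (l - u n); nra.
(* ||u_n + (l - u_n)||^2 <= (d + de) + de + 2 (d + 2) de *)
have := Re_ip_le (u n) (l - u n).
have -> : l = u n + (l - u n) by rewrite addrC subrK.
rewrite sqnormD addrC addKr; nra.
Qed.

Lemma min_sqnorm_orthogonal l k :
  (forall a : CC, sqnorm l <= sqnorm (l + a *: k)) -> ip l k = 0.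
Proof.
move=> lmin; apply: sqmod_le0.
pose t := (sqnorm k + 1)^-1.
have t_gt0 : 0 < t by rewrite invr_gt0; have := sqnorm_ge0 k; lra.
have := lmin ((- t)%:C%C * ip l k).
rewrite sqnormD sqnormZ ipZr.
have -> : sqmod ((- t)%:C%C * ip l k) = t ^+ 2 * sqmod (ip l k).
  by rewrite /sqmod; case: (ip l k) => a b /=; ring.
have -> : complex.Re (((- t)%:C%C * ip l k)^* * ip l k) = - t * sqmod (ip l k).
  by rewrite /sqmod; case: (ip l k) => a b /=; ring.
have -> : t ^+ 2 * sqmod (ip l k) * sqnorm k = t * sqmod (ip l k) * (1 - t).
  by rewrite /t; field; have := sqnorm_ge0 k; lra.
have := sqmod_ge0 (ip l k); move: (sqmod _) => m m_ge0 h.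
have : t * m <= 0 by nra.
by rewrite pmulr_rle0.
Qed.

Lemma exists_min_sqnorm (A : set V) : hcomplete ip -> (A !=set0)%classic ->
  midpoint_closed A -> hclosed A ->
  exists2 l, A l & forall x, A x -> sqnorm l <= sqnorm x.
Proof.
move=> HC [x0 Ax0] Amid Acl.
have infA : has_inf (sqnorm @` A).
  split; first by exists (sqnorm x0), x0.
  by exists 0 => _ [x _ <-]; exact: sqnorm_ge0.
pose d := inf (sqnorm @` A).
have d_le x : A x -> d <= sqnorm x.
  by move=> Ax; apply: (ge_inf (proj2 infA)); exists x.
have /choice [u hu] : forall n : nat,
    exists x, A x /\ sqnorm x <= d + n.+1%:R^-1.
  move=> n; have invS_gt0 : 0 < (n.+1%:R : RR)^-1 by rewrite invr_gt0 ltr0Sn.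
  have [_ [x Ax <-] /ltW] := inf_adherent invS_gt0 infA.
  by exists x.
have [l ul] : exists l, hcvg u l.
  apply: HC => e e_gt0.
  have e2_gt0 : 0 < e ^+ 2 / 4 by rewrite divr_gt0 ?exprn_gt0.
  have [M hM] := eventually_invS_lt _ e2_gt0.
  exists M => m n hm hn; rewrite hnorm_ltE ?ltW //.
  have [[Aum um_le] [Aun un_le]] := (hu m, hu n).
  have := sqnorm_sub_le Amid d_le Aum Aun.
  move: (hM m hm) (hM n hn) um_le un_le.
  by move: (m.+1%:R^-1 : RR) (n.+1%:R^-1 : RR) => a b; lra.
exists l => [|x Ax]; first by apply: Acl ul => n; case: (hu n).
by apply: le_trans (d_le x Ax); apply: sqnorm_hcvg_le ul _ => n; case: (hu n).
Qed.

Section BoundedFunctional.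
Variable f : V -> CC.
Hypothesis f_linear : forall a x y, f (a *: x + y) = a * f x + f y.
Hypothesis f_bounded : exists K, forall x, sqmod (f x) <= K * sqnorm x.

Let f_is_linear : linear (f : V -> CC^o). Proof. exact: f_linear. Qed.
HB.instance Definition _ := GRing.isLinear.Build CC V CC^o _ f f_is_linear.

Lemma hclosed_level c : hclosed [set x | f x = c].
Proof.
move=> u l fu ul; apply/esym/eqP; rewrite -subr_eq0; apply/eqP/sqmod_le0.
have [K fK] := f_bounded.
apply/ler_addgt0Pr => eps eps_gt0; rewrite add0r.
pose de := eps / (`|K| + 1).
have K1_gt0 : 0 < `|K| + 1 by have := normr_ge0 K; lra.
have de_gt0 : 0 < de by rewrite divr_gt0.
have sde_gt0 : 0 < Num.sqrt de by rewrite sqrtr_gt0.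
have := ul _ sde_gt0 => -[M /(_ M (leqnn M))].
rewrite hnorm_ltE ?sqrtr_ge0 // sqr_sqrtr => [sM|]; last exact: ltW.
have := fK (u M - l); rewrite raddfB /= (fu M) => /le_trans; apply.
have sM_ge0 := sqnorm_ge0 (u M - l).
apply: le_trans (ler_wpM2r sM_ge0 (ler_norm K)) _.
apply: le_trans (ler_wpM2l (normr_ge0 K) (ltW sM)) _.
have : `|K| * de + de = eps by rewrite /de; field; rewrite gt_eqF.
lra.
Qed.

Lemma riesz_representation : hcomplete ip -> exists z, forall x, f x = ip x z.
Proof.
move=> HC.
have [[x0 fx0_neq0]|f_eq0] := pselect (exists x0, f x0 != 0); last first.
  exists 0 => x; rewrite ip0r; apply/eqP/negPn/negP => fx_neq0.
  by apply: f_eq0; exists x.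
have A1 : f ((f x0)^-1 *: x0) = 1 by rewrite linearZ; exact: mulVf.
have Amid : midpoint_closed [set x | f x = 1].
  move=> x y /= fx fy; rewrite linearZ raddfD /= fx fy.
  by apply: mulVf; rewrite pnatr_eq0.
have [l /= fl lmin] :=
  exists_min_sqnorm _ HC (ex_intro _ _ A1) Amid (hclosed_level 1).
have l_orth k : f k = 0 -> ip l k = 0.
  move=> fk; apply: min_sqnorm_orthogonal => a; apply: lmin.
  by rewrite /= addrC f_linear fk mulr0 add0r.
have sl_neq0 : sqnorm l != 0.
  rewrite sqnorm_eq0; apply/eqP => l0.
  by move: fl; rewrite l0 raddf0 => /eqP; rewrite eq_sym oner_eq0.
exists ((sqnorm l)^-1%:C%C *: l) => x.
have fk : f (x - f x *: l) = 0.
  by rewrite addrC -scaleNr f_linear fl mulr1 addNr.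
have /eqP := l_orth _ fk; rewrite ipBr ipZr ip_sqnorm subr_eq0 => /eqP lx.
rewrite ipZr (ipC x l) lx rmorphM /= conjCK !conj_real_complex.
by rewrite mulrCA -rmorphM mulVf // mulr1.
Qed.

End BoundedFunctional.

Lemma adjoint_unique {A B : V -> V} :
  (forall x y, ip (A x) y = ip x (B y)) -> adjoint ip A = B.
Proof.
move=> AB; have A_adj : forall x y, ip (A x) y = ip x (adjoint ip A y).
  exact: (epsilon_spec _ (fun B => forall x y, ip (A x) y = ip x (B y))
                       (ex_intro _ B AB)).
apply: funext => y; apply/eqP; rewrite -subr_eq0 -sqnorm_eq0.
by rewrite /sqnorm ipBr -A_adj -AB subrr.
Qed.

Lemma bounded_op_sqnorm {T : V -> V} : bounded_op ip T ->
  exists K, forall x, sqnorm (T x) <= K * sqnorm x.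
Proof.
move=> [_ [M TM]]; exists (M ^+ 2) => x.
rewrite -!sqr_hnorm -exprMn; have := TM x; have := hnorm_ge0 (T x); nra.
Qed.

Lemma adjoint_exists {T : V -> V} : hcomplete ip -> bounded_op ip T ->
  exists B, forall x y, ip (T x) y = ip x (B y).
Proof.
move=> HC bT; have [K TK] := bounded_op_sqnorm bT.
suff /choice[B TB] : forall y, exists z, forall x, ip (T x) y = ip x z.
  by exists B.
move=> y; apply: riesz_representation HC.
  by move=> a x x'; rewrite (proj1 bT) ipDl ipZl.
exists (K * sqnorm y) => x; apply: le_trans (cauchy_schwarz _ _) _.
by rewrite mulrAC ler_wpM2r ?sqnorm_ge0.
Qed.

Definition symmetric_op (X : V -> V) := forall x y, ip (X x) y = ip x (X y).

Definition skew_op (X : V -> V) := forall x y, ip (X x) y = - ip x (X y).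

Lemma selfadjoint_symmetric {T : V -> V} : hcomplete ip -> bounded_op ip T ->
  selfadjoint ip T -> symmetric_op T.
Proof.
move=> HC bT sT x y; have [B TB] := adjoint_exists HC bT.
by move: sT; rewrite /selfadjoint (adjoint_unique TB) => {2}<-.
Qed.

Lemma symmetric_op_mul T S : symmetric_op T -> symmetric_op S ->
  op_mul T S = op_mul S T -> symmetric_op (op_mul T S).
Proof.
by move=> symT symS TS x y; rewrite /op_mul symT symS -/(op_mul S T y) -TS.
Qed.

Lemma skew_op_mul T S : symmetric_op T -> symmetric_op S ->
  op_mul T S = op_scale (-1) (op_mul S T) -> skew_op (op_mul T S).
Proof.
move=> symT symS TS x y; rewrite /op_mul symT symS.
have := congr1 (fun F => F y) TS; rewrite /op_mul /op_scale /= scaleN1r => ->.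
by rewrite ipNr opprK.
Qed.

Lemma adjoint_scale_symmetric c X : symmetric_op X ->
  adjoint ip (op_scale c X) = op_scale c^* X.
Proof.
by move=> symX; apply: adjoint_unique => x y; rewrite ipZl ipZr conjCK symX.
Qed.

Lemma adjoint_scale_skew c X : skew_op X ->
  adjoint ip (op_scale c X) = op_scale (- c^*) X.
Proof.
move=> skX; apply: adjoint_unique => x y.
by rewrite ipZl ipZr rmorphN /= conjCK skX mulrN mulNr.
Qed.

Lemma op_Re_scale_symmetric c X : symmetric_op X ->
  op_Re ip (op_scale c X) = op_scale (complex.Re c)%:C%C X.
Proof.
move=> symX; rewrite /op_Re adjoint_scale_symmetric //; apply: funext => x.
rewrite /op_scale /op_add -scalerDl scalerA; congr (_ *: _).
by case: c => a b; apply/eqP; rewrite eq_complex /=; apply/andP; split;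
  apply/eqP; field.
Qed.

Lemma op_Re_scale_skew c X : skew_op X ->
  op_Re ip (op_scale c X) = op_scale ('i%C * (complex.Im c)%:C%C) X.
Proof.
move=> skX; rewrite /op_Re adjoint_scale_skew //; apply: funext => x.
rewrite /op_scale /op_add -scalerDl scalerA; congr (_ *: _).
by case: c => a b; apply/eqP; rewrite eq_complex /=; apply/andP; split;
  apply/eqP; field.
Qed.

Lemma bounded_op_mul {T S : V -> V} :
  bounded_op ip T -> bounded_op ip S -> bounded_op ip (op_mul T S).
Proof.
move=> [lT [MT TM]] [lS [MS SM]].
split=> [a x y|]; first by rewrite /op_mul lS lT.
exists (`|MT| * `|MS|) => x; apply: le_trans (TM (S x)) _.
apply: le_trans (ler_wpM2r (hnorm_ge0 _) (ler_norm MT)) _.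
rewrite -mulrA ler_wpM2l ?normr_ge0 //; apply: le_trans (SM x) _.
by rewrite ler_wpM2r ?hnorm_ge0 ?ler_norm.
Qed.

Section AlgebraNorm.
Context {N : (V -> V) -> RR}.
Hypothesis HN : sa_algebra_norm ip N.

Lemma N_op_Re_expi_le X t : bounded_op ip X -> symmetric_op X \/ skew_op X ->
  N (op_Re ip (op_scale (expi t) X)) <= N X.
Proof.
case: HN => N_ge0 [_ [NZ _]] bX [symX|skX].
  rewrite op_Re_scale_symmetric // NZ // ler_piMl ?N_ge0 //.
  by rewrite (le_trans (cmod_Re_le _)) ?cmod_expi.
rewrite op_Re_scale_skew // NZ // ler_piMl ?N_ge0 //.
by rewrite (le_trans (cmod_iIm_le _)) ?cmod_expi.
Qed.

Lemma w_N_le {X : V -> V} : bounded_op ip X -> symmetric_op X \/ skew_op X ->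
  w_N ip N X <= N X.
Proof.
move=> bX symX; apply: ge_sup; first by eexists; exists 0.
by move=> _ [t _ <-]; exact: N_op_Re_expi_le.
Qed.

Lemma w_N_symmetric {X : V -> V} :
  bounded_op ip X -> symmetric_op X -> w_N ip N X = N X.
Proof.
move=> bX symX; apply/le_anti; rewrite w_N_le //=; last by left.
have N_at0 : N (op_Re ip (op_scale (expi 0) X)) = N X.
  case: HN => _ [_ [NZ _]].
  by rewrite op_Re_scale_symmetric // /expi cos0 sin0 NZ // /cmod normr1 mul1r.
rewrite -[leLHS]N_at0; apply: sup_upper_bound; last by exists 0.
split; first by eexists; exists 0.
by exists (N X) => _ [t _ <-]; apply: N_op_Re_expi_le => //; left.
Qed.

End AlgebraNorm.

End InnerProductSpace.

Theorem corollary2p9 (V : lmodType CC) (ip : V -> V -> CC)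
  (HH : is_hilbert ip) (N : (V -> V) -> RR) (HN : sa_algebra_norm ip N)
  (T S : V -> V)
  (bT : bounded_op ip T) (bS : bounded_op ip S)
  (sT : selfadjoint ip T) (sS : selfadjoint ip S)
  (hTS : op_mul T S = op_mul S T \/ op_mul T S = op_scale (-1) (op_mul S T)) :
  w_N ip N (op_mul T S) <= Num.min (N T * w_N ip N S) (N S * w_N ip N T).
Proof.
have [ipP HC] := HH.
have symT := selfadjoint_symmetric ipP HC bT sT.
have symS := selfadjoint_symmetric ipP HC bS sS.
rewrite (w_N_symmetric ipP HN bT symT) (w_N_symmetric ipP HN bS symS).
rewrite [N S * _]mulrC minxx.
have [_ [_ [_ [_ [N_mul _]]]]] := HN.
apply: le_trans (w_N_le ipP HN (bounded_op_mul bT bS) _) (N_mul _ _ bT bS).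
by case: hTS => TS; [left; apply: symmetric_op_mul | right; apply: skew_op_mul].
Qed.
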